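(* If $B,C\in \mathcal{B}_{A}(\mathcal{H})$, then \begin{align*} d\omega _{A_{0}}^{4}\left( \begin{bmatrix} 0 & B \\ C & 0 \end{bmatrix} \right) &\leq \max \left\{ \omega _{A}\left( \left( C^{\sharp _{A}}C\right) ^{2}+\left( C^{\sharp _{A}}C\right) ^{4}\right) ,\omega _{A}\left( \left( B^{\sharp _{A}}B\right) ^{2}+\left( B^{\sharp _{A}}B\right) ^{4}\right) \right\} \\ &\quad+2\omega _{A_{0}}^{2}\left( \begin{bmatrix} 0 & C^{\sharp _{A}}CB \\ B^{\sharp _{A}}BC & 0 \end{bmatrix} \right). \end{align*}
   Context: $\mathcal{H}$ is a complex Hilbert space and $A\in\mathcal{B}(\mathcal{H})$ is a positive operator; $\langle x,z\rangle_A=\langle Ax,z\rangle$ and $\|z\|_A=\|A^{1/2}z\|$. $\mathcal{B}_A(\mathcal{H})$ denotes the set of bounded operators $S$ on $\mathcal{H}$ admitting an $A$-adjoint; $S^{\sharp_A}=A^{\dagger}S^*A$ is the distinguished $A$-adjoint ($A^\dagger$ the Moore-Penrose inverse). $\omega_A(S)=\sup\{|\langle Sz,z\rangle_A|:\|z\|_A=1\}$ is the $A$-numerical radius. $A_0=\begin{bmatrix} A&0\\0&A\end{bmatrix}$ on $\mathcal{H}\oplus\mathcal{H}$ induces $\langle x,z\rangle_{A_0}=\langle x_1,z_1\rangle_A+\langle x_2,z_2\rangle_A$; $\omega_{A_0}$ is the $A_0$-numerical radius and $d\omega_{A_0}(X)=\sup\{(|\langle Xz,z\rangle_{A_0}|^2+\|Xz\|_{A_0}^4)^{1/2}:\|z\|_{A_0}=1\}$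 is the $A_0$-Davis-Wielandt radius. *)

From HB Require Import structures.
From mathcomp Require Import all_boot all_order all_algebra.
From mathcomp Require Import complex.
From mathcomp Require Import boolp classical_sets reals.
From Stdlib Require Import ClassicalEpsilon.

Set Implicit Arguments.
Unset Strict Implicit.
Unset Printing Implicit Defensive.

Import Order.TTheory GRing.Theory Num.Theory.
Local Open Scope ring_scope.
Local Open Scope classical_set_scope.

Section HilbertDefs.
Variable R : realType.
Variable V : lmodType R[i].
(* the inner product <.,.> of H, linear in the first argument *)
Variable ip : V -> V -> R[i].

Definition cabs (c : R[i]) : R := Num.sqrt (complex.Re c ^+ 2 + complex.Im c ^+ 2).

Definition hnorm (x : V) : R := Num.sqrt (complex.Re (ip x x)).

Definition hilbert : Prop :=
  [/\ (forall (a : R[i]) (x y z : V), ip (a *: x + y) z = a * ip x z + ip y z),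
      (forall x y : V, ip y x = conjc (ip x y)),
      (forall x : V, complex.Im (ip x x) = 0 /\ 0 <= complex.Re (ip x x)),
      (forall x : V, ip x x = 0 -> x = 0) &
      (forall u : nat -> V,
         (forall e : R, 0 < e -> exists N : nat, forall m n : nat,
            (N <= m)%N -> (N <= n)%N -> hnorm (u m - u n) < e) ->
         exists l : V, forall e : R, 0 < e -> exists N : nat, forall n : nat,
            (N <= n)%N -> hnorm (u n - l) < e)].

Definition bounded_op (T : V -> V) : Prop :=
  (forall (a : R[i]) (x y : V), T (a *: x + y) = a *: T x + T y) /\
  exists M : R, forall x : V, hnorm (T x) <= M * hnorm x.

Definition positive_op (A : V -> V) : Prop :=
  bounded_op A /\ forall x : V, complex.Im (ip (A x) x) = 0 /\ 0 <= complex.Re (ip (A x) x).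

Definition ipA (A : V -> V) (x z : V) : R[i] := ip (A x) z.
Definition normA (A : V -> V) (z : V) : R := Num.sqrt (complex.Re (ipA A z z)).

Definition BA (A S : V -> V) : Prop :=
  bounded_op S /\
  exists T : V -> V, bounded_op T /\ forall x y : V, ipA A (S x) y = ipA A x (T y).

(* S^{#_A} = A^dagger S^* A.  For z, S^*(Az) is the vector w with
   <w,y> = <Az, Sy> for all y, and A^dagger w (for w in R(A)) is the unique
   v in N(A)^perp with A v = w.  Hence S^{#_A} z is the unique v with
   <Av,y> = <Az,Sy> for all y and v orthogonal to N(A). *)
Definition sharpA (A S : V -> V) : V -> V := fun z =>
  epsilon (inhabits (0 : V))
    (fun v => (forall y : V, ip (A v) y = ip (A z) (S y)) /\
              (forall w : V, A w = 0 -> ip v w = 0)).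

Definition omegaA (A S : V -> V) : R :=
  sup [set r : R | exists z : V, normA A z = 1 /\ r = cabs (ipA A (S z) z)].

Definition opmx (P Q S T : V -> V) : V * V -> V * V :=
  fun x => (P x.1 + Q x.2, S x.1 + T x.2).

Definition zero_op : V -> V := fun _ => 0.

Definition ipA0 (A : V -> V) (x z : V * V) : R[i] :=
  ipA A x.1 z.1 + ipA A x.2 z.2.
Definition normA0 (A : V -> V) (z : V * V) : R := Num.sqrt (complex.Re (ipA0 A z z)).

Definition omegaA0 (A : V -> V) (X : V * V -> V * V) : R :=
  sup [set r : R | exists z : V * V, normA0 A z = 1 /\ r = cabs (ipA0 A (X z) z)].

Definition dwA0 (A : V -> V) (X : V * V -> V * V) : R :=
  sup [set r : R | exists z : V * V, normA0 A z = 1 /\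
        r = Num.sqrt (cabs (ipA0 A (X z) z) ^+ 2 + normA0 A (X z) ^+ 4)].

Definition sq_plus_4th (T : V -> V) : V -> V := fun z => T (T z) + iter 4 T z.

End HilbertDefs.

(* For a unit vector z of H (+) H let X := [0 B; C 0] and Q := diag(C^#C, B^#B), so that
   <Qx, y>_A0 = <Xx, Xy>_A0 and QX = [0 C^#CB; B^#BC 0].  With u := Xz and v := Qz we have
   <v, z>_A0 = ||u||^2, and Cauchy-Schwarz applied to z and conj<u,z> u + conj<v,z> v gives
     (|<u,z>|^2 + |<v,z>|^2)^2 <= ||u||^4 + ||v||^4 + 2 |<u,v>|^2.
   The left side is the fourth power of the Davis-Wielandt integrand at z; again by Cauchy-Schwarz
   ||u||^4 <= ||v||^2 = <Q^2 z, z> and ||v||^4 <= <Q^4 z, z>, while <u, v> = <QX z, z>.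
   The suprema are those of bounded sets because every S in B_A(H) is bounded for ||.||_A: for an
   A-adjoint T of S, the A-selfadjoint P := TS is bounded for ||.||, and iterating Cauchy-Schwarz,
   ||Px||_A^(2^k) <= ||P^(2^k) x||_A ||x||_A^(2^k - 1), turns this into an A-bound.  Finally S^#A is
   an A-adjoint of S because N(A) is closed, so every vector of the Hilbert space H has an
   orthogonal projection onto N(A). *)

From HB Require Import structures.
From mathcomp Require Import all_boot all_order all_algebra.
From mathcomp Require Import complex.
From mathcomp Require Import boolp classical_sets reals.
From mathcomp Require Import ring lra.
From Stdlib Require Import ClassicalEpsilon.

Set Implicit Arguments.
Unset Strict Implicit.
Unset Printing Implicit Defensive.

Import Order.TTheory GRing.Theory Num.Theory.
Local Open Scope ring_scope.
Local Open Scope complex_scope.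

Section RealFacts.
Variable R : realType.

Lemma discriminant_le (a b k : R) : 0 <= a -> 0 <= b -> 0 <= k ->
  (forall t, 0 <= a - 2 * t * k + t ^+ 2 * k * b) -> k <= a * b.
Proof.
move=> a0 b0 k0 H.
have [->|kn0] := eqVneq k 0; first by rewrite mulr_ge0.
have [b_eq0|bn0] := eqVneq b 0.
  have := H ((a + 1) / (2 * k)); rewrite b_eq0 mulr0 addr0.
  have -> : 2 * ((a + 1) / (2 * k)) * k = a + 1 by field; rewrite kn0.
  lra.
have bp : 0 < b by rewrite lt_def bn0 b0.
have := H b^-1; rewrite -(ler_pM2r bp) mul0r.
have -> : (a - 2 * b^-1 * k + b^-1 ^+ 2 * k * b) * b = a * b - k by field.
lra.
Qed.

(* Cauchy-Schwarz in R^3 for (a, b, sqrt(2ab)) and (p, q, sqrt(2c)). *)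
Lemma sqr_le_of_weighted_sum (a b c p q x : R) : 0 <= a -> 0 <= b -> 0 <= c ->
  x ^+ 2 <= a * b * c -> (a + b) ^+ 2 <= a * p + b * q + 2 * x ->
  (a + b) ^+ 2 <= p ^+ 2 + q ^+ 2 + 2 * c.
Proof.
move=> a0 b0 c0 hx hs.
set m := Num.sqrt (a * b); set r := Num.sqrt c.
have m0 : 0 <= m := sqrtr_ge0 _.
have r0 : 0 <= r := sqrtr_ge0 _.
have mE : m ^+ 2 = a * b by rewrite sqr_sqrtr // mulr_ge0.
have rE : r ^+ 2 = c by rewrite sqr_sqrtr.
have x_le : x <= m * r.
  apply: le_trans (ler_norm x) _.
  by rewrite -sqrtr_sqr -sqrtrM ?mulr_ge0 // ler_sqrt // mulr_ge0 ?mulr_ge0.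
have cs3 : (a * p + b * q + 2 * (m * r)) ^+ 2 <= (a + b) ^+ 2 * (p ^+ 2 + q ^+ 2 + 2 * c).
  have -> : (a + b) ^+ 2 = a ^+ 2 + b ^+ 2 + 2 * m ^+ 2 by rewrite mE; ring.
  rewrite -rE -subr_ge0.
  have -> : (a ^+ 2 + b ^+ 2 + 2 * m ^+ 2) * (p ^+ 2 + q ^+ 2 + 2 * r ^+ 2)
      - (a * p + b * q + 2 * (m * r)) ^+ 2
      = (a * q - b * p) ^+ 2 + 2 * (a * r - m * p) ^+ 2 + 2 * (b * r - m * q) ^+ 2.
    by ring.
  have := sqr_ge0 (a * q - b * p); have := sqr_ge0 (a * r - m * p).
  have := sqr_ge0 (b * r - m * q); lra.
have t0 : 0 <= p ^+ 2 + q ^+ 2 + 2 * c.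
  by have := sqr_ge0 p; have := sqr_ge0 q; lra.
have [s_eq0|sn0] := eqVneq ((a + b) ^+ 2) 0; first by rewrite s_eq0.
have s_gt0 : 0 < (a + b) ^+ 2 by rewrite lt_def sn0 sqr_ge0.
rewrite -(ler_pM2l s_gt0); apply: le_trans cs3.
rewrite -expr2 ler_sqr ?nnegrE ?sqr_ge0 //; lra.
Qed.

Lemma sqrtr_eq1 (x : R) : 0 <= x -> Num.sqrt x = 1 -> x = 1.
Proof. by move=> x0 sx1; rewrite -(sqr_sqrtr x0) sx1 expr1n. Qed.

Lemma bernoulli_ineq (r : R) n : 0 <= r -> 1 + n%:R * r <= (1 + r) ^+ n.
Proof.
move=> r0; elim: n => [|n IH]; first by rewrite mul0r addr0 expr0.
rewrite exprS -natr1; apply: le_trans (ler_wpM2l (addr_ge0 ler01 r0) IH).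
by have := mulr_ge0 (ler0n R n) (mulr_ge0 r0 r0); nra.
Qed.

Lemma le1_of_pow2_bounded (r K : R) : (forall k, r ^+ (2 ^ k) <= K) -> r <= 1.
Proof.
move=> rK; rewrite leNgt; apply/negP => r_gt1.
have d_gt0 : 0 < r - 1 by rewrite subr_gt0.
pose k := Num.truncn (K / (r - 1)).
have : K < k.+1%:R * (r - 1) by rewrite -ltr_pdivrMr // truncnS_gt.
have : k.+1%:R <= (2 ^ k.+1)%N%:R :> R by rewrite ler_nat ltnW // ltn_expl.
have := bernoulli_ineq (2 ^ k.+1) (ltW d_gt0); rewrite subrKC.
have := rK k.+1; have := ler0n R k.+1; nra.
Qed.

Lemma invSn_lt_eventually (e : R) : 0 < e ->
  exists N, forall n, (N <= n)%N -> n.+1%:R^-1 < e.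
Proof.
move=> e0; exists (Num.truncn e^-1) => n Nn.
rewrite -[e]invrK ltf_pV2 ?posrE ?invr_gt0 ?ltr0Sn //.
by apply: lt_le_trans (truncnS_gt _) _; rewrite ler_nat ltnS.
Qed.

Lemma le_of_le_addM (x y c : R) : 0 <= c -> (forall e, 0 < e -> x <= y + c * e) -> x <= y.
Proof.
move=> c0 xle; apply/ler_addgt0Pr => e e0.
have c1_gt0 : 0 < c + 1 by rewrite ltr_wpDl.
apply: le_trans (xle _ (divr_gt0 e0 c1_gt0)) _; rewrite lerD2l mulrCA ger_pMr //.
by rewrite ler_pdivrMr // mul1r lerDl.
Qed.

Lemma sup_ge0 (E : set R) : (forall r, E r -> 0 <= r) -> 0 <= sup E.
Proof.
move=> E_ge0; have [[[r Er] Eub]|nosup] := pselect (has_sup E); last by rewrite sup_out.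
exact: le_trans (E_ge0 r Er) (ub_le_sup Eub Er).
Qed.

Lemma sup_le_ge0 (E : set R) s : 0 <= s -> (forall r, E r -> r <= s) -> sup E <= s.
Proof.
move=> s0 Es; have [[r Er]|E0] := pselect (exists r, E r); first by apply: ge_sup => //; exists r.
by rewrite sup_out // => -[[r Er] _]; apply: E0; exists r.
Qed.

End RealFacts.

Section ComplexModulus.
Variable R : realType.
Implicit Types (c d : R[i]) (r : R).

Definition csq c : R := complex.Re c ^+ 2 + complex.Im c ^+ 2.

Lemma csq_ge0 c : 0 <= csq c.
Proof. by rewrite addr_ge0 ?sqr_ge0. Qed.

Lemma csqM c d : csq (c * d) = csq c * csq d.
Proof. by case: c => a b; case: d => a' b'; rewrite /csq /=; ring. Qed.

Lemma csqJ c : csq (conjc c) = csq c.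
Proof. by case: c => a b; rewrite /csq /=; ring. Qed.

Lemma csqR r : csq r%:C = r ^+ 2.
Proof. by rewrite /csq /= expr0n addr0. Qed.

Lemma Re_sqr_le_csq c : complex.Re c ^+ 2 <= csq c.
Proof. by rewrite lerDl sqr_ge0. Qed.

Lemma csq_eq0 c : (csq c == 0) = (c == 0).
Proof.
case: c => a b; rewrite /csq eq_complex /= paddr_eq0 ?sqr_ge0 //.
by rewrite !sqrf_eq0.
Qed.

Lemma mulJc c : conjc c * c = (csq c)%:C.
Proof.
by case: c => a b; apply/eqP; rewrite eq_complex /csq /=; apply/andP; split; apply/eqP; ring.
Qed.

Lemma ReD c d : complex.Re (c + d) = complex.Re c + complex.Re d.
Proof. by case: c; case: d. Qed.

Lemma Re_realM r c : complex.Re (r%:C * c) = r * complex.Re c.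
Proof. by case: c => a b; rewrite /= mul0r subr0. Qed.

Lemma cabs_sqr c : cabs c ^+ 2 = csq c.
Proof. by rewrite sqr_sqrtr // csq_ge0. Qed.

Lemma cabs_ge0 c : 0 <= cabs c.
Proof. exact: sqrtr_ge0. Qed.

Lemma Re_le_cabs c : complex.Re c <= cabs c.
Proof.
apply: le_trans (ler_norm _) _.
by rewrite -sqrtr_sqr ler_sqrt ?csq_ge0 // Re_sqr_le_csq.
Qed.

End ComplexModulus.

Record semi_inner (R : realType) (W : lmodType R[i]) (f : W -> W -> R[i]) : Prop :=
  SemiInner {
    semi_innerDZl : forall a x y z, f (a *: x + y) z = a * f x z + f y z;
    semi_innerC : forall x y, f y x = conjc (f x y);
    semi_inner_nneg : forall x, complex.Im (f x x) = 0 /\ 0 <= complex.Re (f x x) }.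

(* Polarization: the imaginary parts of g(x+y, x+y) and g(x+iy, x+iy) give the two halves
   of hermitian symmetry. *)
Lemma semi_inner_of_sesquilinear (R : realType) (W : lmodType R[i]) (g : W -> W -> R[i]) :
  (forall a x y z, g (a *: x + y) z = a * g x z + g y z) ->
  (forall a x y z, g z (a *: x + y) = conjc a * g z x + g z y) ->
  (forall x, complex.Im (g x x) = 0 /\ 0 <= complex.Re (g x x)) -> semi_inner g.
Proof.
move=> gl gr gpos; split=> // x y.
have gD u v z : g (u + v) z = g u z + g v z by have := gl 1 u v z; rewrite scale1r mul1r.
have rD z u v : g z (u + v) = g z u + g z v.
  by have := gr 1 u v z; rewrite scale1r rmorph1 mul1r.
have g0 z : g 0 z = 0 by apply: (addrI (g 0 z)); rewrite -gD !addr0.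
have r0 z : g z 0 = 0 by apply: (addrI (g z 0)); rewrite -rD !addr0.
have gZ a u z : g (a *: u) z = a * g u z by rewrite -[a *: u]addr0 gl g0 addr0.
have rZ z a u : g z (a *: u) = conjc a * g z u by rewrite -[a *: u]addr0 gr r0 addr0.
have [/eqP + _] := gpos (x + y); rewrite gD !rD.
have [/eqP + _] := gpos (x + 'i%C *: y); rewrite gD !rD !gZ !rZ.
case: (gpos x) (gpos y) => [x0 _] [y0 _]; move: x0 y0.
case: (g x x) (g y y) (g x y) (g y x) => [a1 a2] [b1 b2] [c1 c2] [d1 d2] /= -> ->.
move=> /eqP e1 /eqP e2; apply/eqP; rewrite eq_complex /=.
by apply/andP; split; apply/eqP; lra.
Qed.

Section SemiInnerProduct.
Variables (R : realType) (W : lmodType R[i]) (f : W -> W -> R[i]).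
Hypothesis fS : semi_inner f.
Implicit Types (x y z u v w : W) (a : R[i]).

Let fC : forall x y, f y x = conjc (f x y) := semi_innerC fS.

Lemma semi_innerDl x y z : f (x + y) z = f x z + f y z.
Proof. by have := semi_innerDZl fS 1 x y z; rewrite scale1r mul1r. Qed.

Lemma semi_inner0l z : f 0 z = 0.
Proof. by apply: (addrI (f 0 z)); rewrite -semi_innerDl !addr0. Qed.

Lemma semi_innerZl a x z : f (a *: x) z = a * f x z.
Proof. by have := semi_innerDZl fS a x 0 z; rewrite !addr0 semi_inner0l addr0. Qed.

Lemma semi_innerNl x z : f (- x) z = - f x z.
Proof. by rewrite -scaleN1r semi_innerZl mulN1r. Qed.

Lemma semi_innerBl x y z : f (x - y) z = f x z - f y z.
Proof. by rewrite semi_innerDl semi_innerNl. Qed.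

Lemma semi_innerDr z x y : f z (x + y) = f z x + f z y.
Proof. by rewrite fC semi_innerDl rmorphD (fC x z) (fC y z). Qed.

Lemma semi_innerZr z a x : f z (a *: x) = conjc a * f z x.
Proof. by rewrite fC semi_innerZl rmorphM (fC x z). Qed.

Lemma semi_innerNr z x : f z (- x) = - f z x.
Proof. by rewrite fC semi_innerNl rmorphN (fC x z). Qed.

Definition sqnorm x : R := complex.Re (f x x).

Lemma sqnorm_ge0 x : 0 <= sqnorm x.
Proof. by case: (semi_inner_nneg fS x). Qed.

Lemma semi_inner_diag x : f x x = (sqnorm x)%:C.
Proof. by rewrite /sqnorm; case: (semi_inner_nneg fS x); case: (f x x) => a b /= ->. Qed.

Lemma sqnormZ a x : sqnorm (a *: x) = csq a * sqnorm x.
Proof.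
rewrite /sqnorm semi_innerZl semi_innerZr semi_inner_diag.
by case: a => a1 a2; rewrite /csq /=; ring.
Qed.

Lemma sqnormN x : sqnorm (- x) = sqnorm x.
Proof.
have csqN1 : csq (-1 : R[i]) = 1 by rewrite /csq /=; ring.
by rewrite -scaleN1r sqnormZ csqN1 mul1r.
Qed.

Lemma sqnormD x y : sqnorm (x + y) = sqnorm x + sqnorm y + 2 * complex.Re (f x y).
Proof.
rewrite /sqnorm semi_innerDl !semi_innerDr (fC x y) -/(sqnorm x) -/(sqnorm y) !semi_inner_diag.
by case: (f x y) => c1 c2 /=; ring.
Qed.

Lemma sqnormB x y : sqnorm (x - y) = sqnorm x + sqnorm y - 2 * complex.Re (f x y).
Proof. by rewrite sqnormD sqnormN semi_innerNr /=; case: (f x y) => c1 c2 /=; ring. Qed.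

Lemma parallelogram x y : sqnorm (x - y) + sqnorm (x + y) = 2 * sqnorm x + 2 * sqnorm y.
Proof. by rewrite sqnormB sqnormD; ring. Qed.

Lemma sqnorm_sub_proj x y (t : R) :
  sqnorm (x - (t%:C * f x y) *: y) =
    sqnorm x - 2 * t * csq (f x y) + t ^+ 2 * csq (f x y) * sqnorm y.
Proof.
rewrite sqnormB sqnormZ csqM csqR semi_innerZr.
by case: (f x y) => c1 c2; rewrite /csq /=; ring.
Qed.

Lemma cauchy_schwarz x y : csq (f x y) <= sqnorm x * sqnorm y.
Proof.
apply: discriminant_le; rewrite ?sqnorm_ge0 ?csq_ge0 // => t.
by rewrite -sqnorm_sub_proj sqnorm_ge0.
Qed.

Lemma Re_semi_inner_sqr_le x y : complex.Re (f x y) ^+ 2 <= sqnorm x * sqnorm y.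
Proof. exact: le_trans (Re_sqr_le_csq _) (cauchy_schwarz x y). Qed.

Lemma semi_inner_eq0_of_min x w :
  (forall c, sqnorm x <= sqnorm (x - c *: w)) -> f x w = 0.
Proof.
move=> xmin; apply/eqP; rewrite -csq_eq0 eq_le csq_ge0 andbT.
rewrite -[0](mul0r (sqnorm w)); apply: discriminant_le; rewrite ?sqnorm_ge0 ?csq_ge0 //.
by move=> t; have := xmin (t%:C * f x w); rewrite sqnorm_sub_proj; lra.
Qed.

Lemma sqnormD_le x y (t : R) : 0 < t ->
  sqnorm (x + y) <= (1 + t) * sqnorm x + (1 + t^-1) * sqnorm y.
Proof.
move=> t0; have := sqnorm_ge0 (t%:C *: x - y).
rewrite sqnormD sqnormB sqnormZ csqR semi_innerZl Re_realM => h.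
rewrite -(ler_pM2l t0).
have -> : t * ((1 + t) * sqnorm x + (1 + t^-1) * sqnorm y) =
    t * sqnorm x + t ^+ 2 * sqnorm x + t * sqnorm y + sqnorm y.
  by field; rewrite gt_eqF.
lra.
Qed.

Lemma sqnormD_le2 x y : sqnorm (x + y) <= 2 * sqnorm x + 2 * sqnorm y.
Proof. by have := sqnormD_le x y ltr01; rewrite invr1. Qed.

Lemma sqnormDZ a u b v : sqnorm (a *: u + b *: v) =
  csq a * sqnorm u + csq b * sqnorm v + 2 * complex.Re (a * (conjc b * f u v)).
Proof. by rewrite sqnormD !sqnormZ semi_innerZl semi_innerZr. Qed.

Lemma sqr_csq_add_le z u v : sqnorm z = 1 ->
  (csq (f u z) + csq (f v z)) ^+ 2 <= sqnorm u ^+ 2 + sqnorm v ^+ 2 + 2 * csq (f u v).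
Proof.
move=> z1; set a := f u z; set b := f v z.
have := cauchy_schwarz (conjc a *: u + conjc b *: v) z.
rewrite semi_innerDl !semi_innerZl -/a -/b !mulJc -rmorphD csqR z1 mulr1 sqnormDZ !csqJ conjcK.
apply: sqr_le_of_weighted_sum; rewrite ?csq_ge0 //.
by apply: le_trans (Re_sqr_le_csq _) _; rewrite !csqM csqJ mulrA.
Qed.

Lemma dw_integrand_sqr_le (X Q : W -> W) z :
  (forall x y, f (Q x) y = f (X x) (X y)) -> sqnorm z = 1 ->
  (csq (f (X z) z) + sqnorm (X z) ^+ 2) ^+ 2 <=
    complex.Re (f (Q (Q z) + Q (Q (Q (Q z)))) z) + 2 * csq (f (Q (X z)) z).
Proof.
move=> QX z1.
have Qsa x y : f (Q x) y = f x (Q y) by rewrite QX fC -QX -fC.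
have QzE : f (Q z) z = (sqnorm (X z))%:C by rewrite QX semi_inner_diag.
have QQzE : f (Q (Q z)) z = (sqnorm (Q z))%:C by rewrite Qsa semi_inner_diag.
have sqnX : sqnorm (X z) ^+ 2 <= sqnorm (Q z).
  by have := cauchy_schwarz (Q z) z; rewrite QzE csqR z1 mulr1.
have sqnQ : sqnorm (Q z) ^+ 2 <= sqnorm (Q (Q z)).
  by have := cauchy_schwarz (Q (Q z)) z; rewrite QQzE csqR z1 mulr1.
have -> : complex.Re (f (Q (Q z) + Q (Q (Q (Q z)))) z) = sqnorm (Q z) + sqnorm (Q (Q z)).
  by rewrite semi_innerDl ReD (Qsa (Q (Q (Q z)))) (Qsa (Q z)) (Qsa (Q (Q z))).
have := sqr_csq_add_le (X z) (Q z) z1.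
rewrite QzE csqR -Qsa; lra.
Qed.

End SemiInnerProduct.

Definition form_bounded (R : realType) (W : lmodType R[i]) (f : W -> W -> R[i])
    (T : W -> W) : Prop :=
  exists2 K, 0 <= K & forall x, sqnorm f (T x) <= K * sqnorm f x.

Section FormBounded.
Variables (R : realType) (W : lmodType R[i]) (f : W -> W -> R[i]).
Hypothesis fS : semi_inner f.

Lemma form_bounded_comp (T1 T2 : W -> W) :
  form_bounded f T1 -> form_bounded f T2 -> form_bounded f (T1 \o T2).
Proof.
move=> [K1 K1_ge0 T1K] [K2 K2_ge0 T2K]; exists (K1 * K2) => [|x]; first exact: mulr_ge0.
by rewrite -mulrA; apply: le_trans (T1K _) _; rewrite ler_wpM2l.
Qed.

Lemma form_bounded_add (T1 T2 : W -> W) :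
  form_bounded f T1 -> form_bounded f T2 -> form_bounded f (fun x => T1 x + T2 x).
Proof.
move=> [K1 K1_ge0 T1K] [K2 K2_ge0 T2K]; exists (2 * K1 + 2 * K2) => [|x].
  by rewrite addr_ge0 ?mulr_ge0.
apply: le_trans (sqnormD_le2 fS _ _) _.
by have := T1K x; have := T2K x; lra.
Qed.

Lemma form_bounded_of_adjoint (T S : W -> W) :
  (forall x y, f (T x) y = f x (S y)) -> form_bounded f S -> form_bounded f T.
Proof.
move=> TS [K K0 SK]; exists K => // x.
have : sqnorm f (T x) ^+ 2 <= sqnorm f x * (K * sqnorm f (T x)).
  rewrite {1}/sqnorm TS; apply: le_trans (Re_semi_inner_sqr_le fS _ _) _.
  by rewrite ler_wpM2l ?sqnorm_ge0.
have := mulr_ge0 K0 (sqnorm_ge0 fS x); have := sqnorm_ge0 fS (T x); nra.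
Qed.

Lemma form_bounded_of_modulus (S P : W -> W) :
  (forall x y, f (S x) (S y) = f x (P y)) -> form_bounded f P -> form_bounded f S.
Proof.
move=> SP [K K0 PK]; exists (Num.sqrt K) => [|x]; first exact: sqrtr_ge0.
rewrite -ler_sqr ?nnegrE ?mulr_ge0 ?sqrtr_ge0 ?sqnorm_ge0 // exprMn sqr_sqrtr //.
rewrite {1}/sqnorm SP; apply: le_trans (Re_semi_inner_sqr_le fS _ _) _.
by rewrite mulrC expr2 mulrA ler_wpM2r ?sqnorm_ge0.
Qed.

Lemma form_bounded_sq_plus_4th (T : W -> W) :
  form_bounded f T -> form_bounded f (sq_plus_4th T).
Proof.
move=> TK; have T2K := form_bounded_comp TK TK.
exact: form_bounded_add T2K (form_bounded_comp T2K T2K).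
Qed.

End FormBounded.

Section PairForm.
Variables (R : realType) (W : lmodType R[i]) (f : W -> W -> R[i]).
Hypothesis fS : semi_inner f.

Definition pair_form : W * W -> W * W -> R[i] := fun x z => f x.1 z.1 + f x.2 z.2.

Lemma semi_inner_pair : semi_inner pair_form.
Proof.
split=> [a x y z|x y|x]; rewrite /pair_form /=.
- by rewrite !(semi_innerDZl fS) mulrDr addrACA.
- by rewrite (semi_innerC fS x.1) (semi_innerC fS x.2) rmorphD.
move: (semi_inner_nneg fS x.1) (semi_inner_nneg fS x.2).
by case: (f x.1 x.1) (f x.2 x.2) => [a1 a2] [b1 b2] /= [-> ?] [-> ?]; rewrite addr0 addr_ge0.
Qed.

Lemma sqnorm_pair z : sqnorm pair_form z = sqnorm f z.1 + sqnorm f z.2.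
Proof. exact: ReD. Qed.

Lemma form_bounded_antidiag (P S : W -> W) : form_bounded f P -> form_bounded f S ->
  form_bounded pair_form (opmx (@zero_op _ W) P S (@zero_op _ W)).
Proof.
move=> [K1 K1_ge0 PK] [K2 K2_ge0 SK]; exists (K1 + K2) => [|z]; first exact: addr_ge0.
rewrite !sqnorm_pair /opmx /zero_op /= add0r addr0.
have := PK z.2; have := SK z.1; have := sqnorm_ge0 fS z.1; have := sqnorm_ge0 fS z.2.
nra.
Qed.

End PairForm.

Section PowerTrick.
Variables (R : realType) (W : lmodType R[i]) (f : W -> W -> R[i]) (h : W -> R) (P : W -> W) (c : R).
Hypotheses (fS : semi_inner f) (c_gt0 : 0 < c).
Hypothesis P_selfadjoint : forall x y, f (P x) y = f x (P y).
Hypothesis P_h_bounded : forall x, h (P x) <= c * h x.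
Hypothesis sqnorm_le_h : forall x, sqnorm f x <= h x.

Lemma selfadjoint_iter x y n : f (iter n P x) y = f x (iter n P y).
Proof. by elim: n x y => [//|n IH] x y; rewrite iterS P_selfadjoint IH -iterSr. Qed.

Lemma sqnorm_iter_sqr_le x m :
  sqnorm f (iter m P x) ^+ 2 <= sqnorm f (iter (m + m) P x) * sqnorm f x.
Proof. by rewrite /sqnorm selfadjoint_iter -iterD mulrC Re_semi_inner_sqr_le. Qed.

(* Iterating sqnorm_iter_sqr_le bounds (sqnorm (P x) / sqnorm x)^(2^k) by
   sqnorm (P^(2^k) x) / sqnorm x <= c^(2^k) h x / sqnorm x. *)
Lemma sqnorm_le_of_selfadjoint x : sqnorm f (P x) <= c * sqnorm f x.
Proof.
have x_ge0 := sqnorm_ge0 fS x.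
have [x0|xn0] := eqVneq (sqnorm f x) 0.
  have := sqnorm_iter_sqr_le x 1; rewrite x0 !mulr0 /=.
  by have := sqnorm_ge0 fS (P x); nra.
have x_gt0 : 0 < sqnorm f x by rewrite lt_def xn0.
have iterP_h n y : h (iter n P y) <= c ^+ n * h y.
  elim: n => [|n IH]; first by rewrite mul1r.
  by rewrite iterS exprS -mulrA; apply: le_trans (P_h_bounded _) _; rewrite ler_pM2l.
pose e k := sqnorm f (iter (2 ^ k) P x) / sqnorm f x.
have pow2_le k : (sqnorm f (P x) / sqnorm f x) ^+ (2 ^ k) <= e k.
  elim: k => [|k IH]; first by rewrite expn0 expr1.
  rewrite expnS mul2n -addnn exprD -expr2.
  apply: le_trans (_ : e k ^+ 2 <= _).
    by rewrite ler_sqr ?nnegrE ?exprn_ge0 ?divr_ge0 ?sqnorm_ge0.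
  rewrite /e expnS mul2n -addnn expr_div_n ler_pdivrMr ?exprn_gt0 //.
  by apply: le_trans (sqnorm_iter_sqr_le x _) _; rewrite expr2 mulrA divfK.
suff : sqnorm f (P x) / (c * sqnorm f x) <= 1.
  by rewrite ler_pdivrMr ?mulr_gt0 // mul1r.
apply: (le1_of_pow2_bounded (K := h x / sqnorm f x)) => k.
rewrite [c * _]mulrC invfM mulrA exprMn exprVn.
apply: le_trans (ler_wpM2r _ (pow2_le k)) _; first by rewrite invr_ge0 exprn_ge0 // ltW.
rewrite /e mulrAC ler_wpM2r ?invr_ge0 // ler_pdivrMr ?exprn_gt0 // mulrC.
exact: le_trans (sqnorm_le_h _) (iterP_h _ x).
Qed.

End PowerTrick.

Section NumericalRadius.
Variables (R : realType) (W : lmodType R[i]) (f : W -> W -> R[i]).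
Hypothesis fS : semi_inner f.

(* [sup] of a set that is not bounded above is 0, hence the boundedness hypotheses below. *)
Definition numrad (T : W -> W) : R :=
  sup [set r | exists z, Num.sqrt (sqnorm f z) = 1 /\ r = cabs (f (T z) z)].

Lemma numrad_ge0 T : 0 <= numrad T.
Proof. by apply: sup_ge0 => _ [z [_ ->]]; exact: cabs_ge0. Qed.

Lemma cabs_le_numrad T z : form_bounded f T -> sqnorm f z = 1 ->
  cabs (f (T z) z) <= numrad T.
Proof.
move=> [K K0 TK] z1; apply: ub_le_sup; last by exists z; rewrite z1 sqrtr1.
exists (K + 1) => _ [y [/(sqrtr_eq1 (sqnorm_ge0 fS y)) y1 ->]].
have : cabs (f (T y) y) ^+ 2 <= K.
  rewrite cabs_sqr; apply: le_trans (cauchy_schwarz fS _ _) _.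
  by have := TK y; rewrite y1 !mulr1.
have := cabs_ge0 (f (T y) y); nra.
Qed.

Lemma Re_form_le_numrad T x : scalable T -> form_bounded f T ->
  complex.Re (f (T x) x) <= numrad T * sqnorm f x.
Proof.
move=> Tlin TK; have x_ge0 := sqnorm_ge0 fS x.
have [x0|xn0] := eqVneq (sqnorm f x) 0.
  have := Re_semi_inner_sqr_le fS (T x) x; rewrite x0 !mulr0; nra.
set s := Num.sqrt (sqnorm f x).
have s_gt0 : 0 < s by rewrite sqrtr_gt0 lt_def xn0.
have s2 : s ^+ 2 = sqnorm f x by rewrite sqr_sqrtr.
have y1 : sqnorm f ((s^-1)%:C *: x) = 1.
  by rewrite sqnormZ // csqR -s2 -exprMn mulVf ?gt_eqF // expr1n.
have := le_trans (Re_le_cabs _) (cabs_le_numrad TK y1).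
rewrite Tlin semi_innerZl // semi_innerZr // conjc_real mulrA -rmorphM Re_realM -s2.
have -> : s^-1 / s = (s ^+ 2)^-1 by rewrite expr2 invfM.
by rewrite mulrC ler_pdivrMr ?exprn_gt0.
Qed.

Lemma scalable_sq_plus_4th (T : W -> W) : scalable T -> scalable (sq_plus_4th T).
Proof. by move=> Tlin a x; rewrite /sq_plus_4th /= !Tlin scalerDr. Qed.

Lemma Re_pair_diag_le_max (T1 T2 : W -> W) z :
  scalable T1 -> scalable T2 -> form_bounded f T1 -> form_bounded f T2 ->
  sqnorm (pair_form f) z = 1 ->
  complex.Re (pair_form f (T1 z.1, T2 z.2) z) <= Num.max (numrad T1) (numrad T2).
Proof.
move=> T1s T2s T1b T2b; rewrite sqnorm_pair /pair_form ReD /= => z1.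
have := Re_form_le_numrad z.1 T1s T1b; have := Re_form_le_numrad z.2 T2s T2b.
have : numrad T1 <= Num.max (numrad T1) (numrad T2) by rewrite le_max lexx.
have : numrad T2 <= Num.max (numrad T1) (numrad T2) by rewrite le_max lexx orbT.
have := sqnorm_ge0 fS z.1; have := sqnorm_ge0 fS z.2; nra.
Qed.

Definition dwrad (T : W -> W) : R :=
  sup [set r | exists z, Num.sqrt (sqnorm f z) = 1 /\
        r = Num.sqrt (cabs (f (T z) z) ^+ 2 + Num.sqrt (sqnorm f (T z)) ^+ 4)].

Lemma dwrad_le (X Q : W -> W) (c : R) : 0 <= c ->
  (forall x y, f (Q x) y = f (X x) (X y)) ->
  (forall z, sqnorm f z = 1 ->
     complex.Re (f (Q (Q z) + Q (Q (Q (Q z)))) z) + 2 * csq (f (Q (X z)) z) <= c) ->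
  dwrad X ^+ 4 <= c.
Proof.
move=> c0 QX Xc.
have pow4 (a : R) : 0 <= a -> Num.sqrt a ^+ 4 = a ^+ 2.
  by move=> a0; rewrite (_ : 4 = 2 * 2)%N // exprM sqr_sqrtr.
have dw_ge0 : 0 <= dwrad X by apply: sup_ge0 => _ [z [_ ->]]; apply: sqrtr_ge0.
have -> : c = Num.sqrt (Num.sqrt c) ^+ 4 by rewrite pow4 ?sqrtr_ge0 // sqr_sqrtr.
rewrite ler_pXn2r ?nnegrE ?sqrtr_ge0 //.
apply: sup_le_ge0 => [|_ [z [/(sqrtr_eq1 (sqnorm_ge0 fS z)) z1 ->]]]; first exact: sqrtr_ge0.
rewrite ler_sqrt ?sqrtr_ge0 // cabs_sqr pow4 ?sqnorm_ge0 //.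
rewrite -ler_sqr ?nnegrE ?sqrtr_ge0 ?addr_ge0 ?csq_ge0 ?sqr_ge0 // sqr_sqrtr //.
exact: le_trans (dw_integrand_sqr_le fS QX z1) (Xc z z1).
Qed.

End NumericalRadius.

Section Projection.
Variables (R : realType) (W : lmodType R[i]) (f : W -> W -> R[i]).
Hypothesis fH : hilbert f.

Lemma hilbert_semi_inner : semi_inner f.
Proof. by case: fH. Qed.

Let fS := hilbert_semi_inner.

Lemma sqnorm_le_of_hnorm_le (T : W -> W) (M : R) :
  (forall x, hnorm f (T x) <= M * hnorm f x) -> forall x, sqnorm f (T x) <= M ^+ 2 * sqnorm f x.
Proof.
move=> TM x; have hnormE y : sqnorm f y = hnorm f y ^+ 2 by rewrite sqr_sqrtr // sqnorm_ge0.
rewrite !hnormE -exprMn ler_sqr ?nnegrE ?sqrtr_ge0 //.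
exact: le_trans (sqrtr_ge0 _) (TM x).
Qed.

Definition sqnorm_cvg (u : nat -> W) (l : W) : Prop :=
  forall e, 0 < e -> exists N, forall n, (N <= n)%N -> sqnorm f (u n - l) < e.

Lemma hilbert_cvg (u : nat -> W) :
  (forall e, 0 < e -> exists N, forall m n, (N <= m)%N -> (N <= n)%N ->
     sqnorm f (u m - u n) < e) ->
  exists l, sqnorm_cvg u l.
Proof.
have hnormE x : hnorm f x = Num.sqrt (sqnorm f x) by [].
move=> u_cauchy; case: fH => _ _ _ _ /(_ u) [].
  move=> e e0; have [N uN] := u_cauchy _ (exprn_gt0 2 e0).
  exists N => m n Nm Nn; rewrite hnormE -(ger0_norm (ltW e0)) -sqrtr_sqr.
  by rewrite ltr_sqrt ?exprn_gt0 // uN.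
move=> l ul; exists l => e e0.
have [N uN] : exists N, forall n, (N <= n)%N -> hnorm f (u n - l) < Num.sqrt e.
  by apply: ul; rewrite sqrtr_gt0.
by exists N => n Nn; move: (uN n Nn); rewrite hnormE ltr_sqrt.
Qed.

Variable M : set W.
Hypotheses (M0 : M 0) (MD : forall x y, M x -> M y -> M (x + y)).
Hypothesis MZ : forall a x, M x -> M (a *: x).
Hypothesis M_closed : forall u l, (forall n, M (u n)) -> sqnorm_cvg u l -> M l.
Variable v : W.

Definition dist2 : R := inf [set sqnorm f (v - n) | n in M].

Lemma has_inf_dist2 : has_inf [set sqnorm f (v - n) | n in M].
Proof.
split; first by exists (sqnorm f (v - 0)), 0.
by exists 0 => _ [m _ <-]; apply: sqnorm_ge0.
Qed.

Lemma dist2_le n : M n -> dist2 <= sqnorm f (v - n).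
Proof. by move=> Mn; apply: (ge_inf has_inf_dist2.2); exists n. Qed.

Lemma dist2_ge0 : 0 <= dist2.
Proof. by apply: lb_le_inf has_inf_dist2.1 _ => _ [m _ <-]; apply: sqnorm_ge0. Qed.

Lemma exists_minimizing_seq : exists ns : nat -> W,
  (forall k, M (ns k)) /\ forall k, sqnorm f (v - ns k) < dist2 + k.+1%:R^-1.
Proof.
suff /choice[ns nsP] : forall k : nat, exists n, M n /\ sqnorm f (v - n) < dist2 + k.+1%:R^-1.
  by exists ns; split => k; case: (nsP k).
move=> k; have k_gt0 : 0 < k.+1%:R^-1 :> R by rewrite invr_gt0 ltr0Sn.
by have [_ [n Mn <-] nlt] := inf_adherent k_gt0 has_inf_dist2; exists n.
Qed.

Lemma minimizing_seq_cauchy (ns : nat -> W) :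
    (forall k, M (ns k)) -> (forall k, sqnorm f (v - ns k) < dist2 + k.+1%:R^-1) ->
  forall j k, sqnorm f (ns j - ns k) <= 2 * j.+1%:R^-1 + 2 * k.+1%:R^-1.
Proof.
move=> Mns ns_lt j k.
set m := (2^-1 : R[i]) *: (ns j + ns k).
have two_vm : (v - ns k) + (v - ns j) = 2 *: (v - m).
  rewrite /m scalerBr scalerA mulfV ?pnatr_eq0 // scale1r scaler_nat mulr2n.
  by rewrite opprD (addrC (- ns j)) addrACA.
have diff_jk : (v - ns k) - (v - ns j) = ns j - ns k by rewrite opprB addrC addrA subrK.
have := parallelogram fS (v - ns k) (v - ns j).
rewrite diff_jk two_vm sqnormZ // (_ : csq 2 = 4); last by rewrite /csq /=; ring.
have := dist2_le (MZ 2^-1 (MD (Mns j) (Mns k))); rewrite -/m.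
have := ns_lt j; have := ns_lt k.
move: (j.+1%:R^-1 : R) (k.+1%:R^-1 : R) => x y; lra.
Qed.

Lemma exists_minimizer : exists2 l, M l & sqnorm f (v - l) <= dist2.
Proof.
have [ns [Mns ns_lt]] := exists_minimizing_seq.
have [l ns_l] : exists l, sqnorm_cvg ns l.
  apply: hilbert_cvg => e e0.
  have [N Nlt] : exists N, forall n, (N <= n)%N -> n.+1%:R^-1 < e / 4.
    by apply: invSn_lt_eventually; rewrite divr_gt0.
  exists N => m n Nm Nn; apply: le_lt_trans (minimizing_seq_cauchy Mns ns_lt m n) _.
  have := Nlt _ Nm; have := Nlt _ Nn; move: (m.+1%:R^-1 : R) (n.+1%:R^-1 : R) => x y.
  lra.
exists l; first exact: M_closed Mns ns_l.
apply: (le_of_le_addM dist2_ge0) => t t_gt0.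
have t_ge0 := ltW t_gt0; have tV_ge0 : 0 <= t^-1 by rewrite invr_ge0.
apply: (le_of_le_addM (c := 1 + t + (1 + t^-1))) => [|e e_gt0].
  by rewrite !addr_ge0.
have [N1 N1lt] := invSn_lt_eventually e_gt0; have [N2 N2lt] := ns_l e e_gt0.
pose k := maxn N1 N2.
have inv_lt := N1lt k (leq_maxl _ _); have ns_l_lt := N2lt k (leq_maxr _ _).
have v_nsk_le : sqnorm f (v - ns k) <= dist2 + e.
  by have := ns_lt k; move: (k.+1%:R^-1 : R) inv_lt => x; lra.
rewrite -(subrK (ns k) v) -addrA.
apply: le_trans (sqnormD_le fS _ _ t_gt0) _.
have := ler_wpM2l (addr_ge0 ler01 t_ge0) v_nsk_le.
have := ler_wpM2l (addr_ge0 ler01 tV_ge0) (ltW ns_l_lt).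
lra.
Qed.

Lemma orthogonal_projection : exists2 n, M n & forall w, M w -> f (v - n) w = 0.
Proof.
have [l Ml l_min] := exists_minimizer.
exists l => // w Mw; apply: (semi_inner_eq0_of_min fS) => c.
by apply: le_trans l_min _; rewrite -addrA -opprD; apply/dist2_le/MD/MZ.
Qed.

End Projection.

Section RadiiAsFormRadii.
Variables (R : realType) (V : lmodType R[i]) (ip : V -> V -> R[i]) (A : V -> V).

Lemma omegaA_numrad : omegaA ip A = numrad (ipA ip A).
Proof. by []. Qed.

Lemma omegaA0_numrad : omegaA0 ip A = numrad (pair_form (ipA ip A)).
Proof. by []. Qed.

Lemma dwA0_dwrad : dwA0 ip A = dwrad (pair_form (ipA ip A)).
Proof. by []. Qed.

End RadiiAsFormRadii.

Section PositiveOperator.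
Variables (R : realType) (V : lmodType R[i]) (ip : V -> V -> R[i]) (A : V -> V).
Hypotheses (ipH : hilbert ip) (Apos : positive_op ip A).

Let ipS := hilbert_semi_inner ipH.
Let Alin : linear A := Apos.1.1.
HB.instance Definition _ := GRing.isLinear.Build R[i] V V *:%R A Alin.

Lemma ipA_semi_inner : semi_inner (ipA ip A).
Proof.
apply: semi_inner_of_sesquilinear => [a x y z|a x y z|x]; rewrite /ipA.
- by rewrite linearP (semi_innerDZl ipS).
- by rewrite semi_innerDr // semi_innerZr.
- exact: Apos.2.
Qed.

Let ipAS := ipA_semi_inner.

Lemma ipA_sqnorm_le : exists2 cA, 0 <= cA & forall w, sqnorm (ipA ip A) w <= cA * sqnorm ip w.
Proof.
have [M AM] := Apos.1.2; exists `|M| => // w.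
rewrite -ler_sqr ?nnegrE ?mulr_ge0 ?sqnorm_ge0 // exprMn real_normK ?num_real //.
apply: le_trans (Re_semi_inner_sqr_le ipS (A w) w) _.
by rewrite expr2 mulrA ler_wpM2r ?sqnorm_ge0 // (sqnorm_le_of_hnorm_le ipH AM).
Qed.

Lemma kernel_closed (u : nat -> V) l :
  (forall n, A (u n) = 0) -> sqnorm_cvg ip u l -> A l = 0.
Proof.
move=> Au ul; have [M AM] := Apos.1.2.
have ipd : forall x, ip x x = 0 -> x = 0 by case: ipH.
apply/ipd; rewrite semi_inner_diag //; congr (_%:C); apply/eqP; rewrite eq_le sqnorm_ge0 // andbT.
apply: (le_of_le_addM (sqr_ge0 M)) => e e_gt0; rewrite add0r.
have [N uN] := ul e e_gt0.
have -> : A l = A (l - u N) by rewrite linearB /= Au subr0.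
apply: le_trans (sqnorm_le_of_hnorm_le ipH AM _) _.
by rewrite -sqnormN // opprB ler_wpM2l ?sqr_ge0 // ltW // uN.
Qed.

Lemma kernel_orth_decomp v : exists2 n, A n = 0 & forall w, A w = 0 -> ip (v - n) w = 0.
Proof.
apply: (orthogonal_projection ipH (M := [set n | A n = 0])) => /=.
- exact: linear0.
- by move=> x y Ax Ay; rewrite linearD /= Ax Ay addr0.
- by move=> a x Ax; rewrite linearZ /= Ax scaler0.
- exact: kernel_closed.
Qed.

Section Sharp.
Variable S : V -> V.
Hypothesis SBA : BA ip A S.

Let Slin : linear S := SBA.1.1.
HB.instance Definition _ := GRing.isLinear.Build R[i] V V *:%R S Slin.

Local Notation Ssharp := (sharpA ip A S).

Lemma sharpA_spec z : (forall y, ip (A (Ssharp z)) y = ip (A z) (S y)) /\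
                      (forall w, A w = 0 -> ip (Ssharp z) w = 0).
Proof.
apply: (epsilon_spec (inhabits 0) (fun v => (forall y, ip (A v) y = ip (A z) (S y)) /\ _)).
have [_ [T [_ ST]]] := SBA; have [n An n_orth] := kernel_orth_decomp (T z).
exists (T z - n); split => [y|]; last exact: n_orth.
rewrite linearB /= An subr0; change (ipA ip A (T z) y = ipA ip A z (S y)).
by rewrite (semi_innerC ipAS y) -ST (semi_innerC ipAS (S y)).
Qed.

Lemma ipA_sharpA z y : ipA ip A (Ssharp z) y = ipA ip A z (S y).
Proof. exact: (sharpA_spec z).1. Qed.

Lemma sharpA_linear : linear Ssharp.
Proof.
move=> a x y; set D := Ssharp (a *: x + y) - (a *: Ssharp x + Ssharp y).
have ipd : forall v, ip v v = 0 -> v = 0 by case: ipH.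
have AD : A D = 0.
  apply/ipd; change (ipA ip A D (A D) = 0).
  rewrite (semi_innerBl ipAS) (semi_innerDl ipAS) (semi_innerZl ipAS) !ipA_sharpA.
  by rewrite (semi_innerDZl ipAS) subrr.
apply/eqP; rewrite -subr_eq0 -/D; apply/eqP/ipd.
rewrite {1}/D (semi_innerBl ipS) (semi_innerDl ipS) (semi_innerZl ipS).
by rewrite !(sharpA_spec _).2 // mulr0 addr0 subrr.
Qed.

HB.instance Definition _ := GRing.isLinear.Build R[i] V V *:%R Ssharp sharpA_linear.

Lemma ipA_modulus x y : ipA ip A ((Ssharp \o S) x) y = ipA ip A (S x) (S y).
Proof. exact: ipA_sharpA. Qed.

Lemma BA_form_bounded : form_bounded (ipA ip A) S.
Proof.
have [[_ [MS SM]] [T [[_ [MT TM]] ST]]] := SBA.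
have TS_modulus x y : ipA ip A (S x) (S y) = ipA ip A x ((T \o S) y) by exact: ST.
apply: (form_bounded_of_modulus ipAS TS_modulus).
have TS_selfadjoint x y : ipA ip A ((T \o S) x) y = ipA ip A x ((T \o S) y).
  by rewrite /= (semi_innerC ipAS y) -ST -TS_modulus (semi_innerC ipAS (S y)).
pose c := MT ^+ 2 * MS ^+ 2 + 1.
have c_gt0 : 0 < c by rewrite ltr_wpDl // mulr_ge0 ?sqr_ge0.
have [cA cA_ge0 ipA_le] := ipA_sqnorm_le.
exists c; first exact: ltW.
apply: (sqnorm_le_of_selfadjoint ipAS c_gt0 TS_selfadjoint
          (h := fun x => cA * sqnorm ip x)) => // x.
rewrite mulrCA ler_wpM2l //= (le_trans (sqnorm_le_of_hnorm_le ipH TM _)) //.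
apply: le_trans (ler_wpM2l (sqr_ge0 MT) (sqnorm_le_of_hnorm_le ipH SM x)) _.
by rewrite mulrA ler_wpM2r ?sqnorm_ge0 // lerDl.
Qed.

Lemma sharpA_form_bounded : form_bounded (ipA ip A) Ssharp.
Proof. exact: (form_bounded_of_adjoint ipAS ipA_sharpA) BA_form_bounded. Qed.

Lemma modulus_form_bounded : form_bounded (ipA ip A) (Ssharp \o S).
Proof. exact: form_bounded_comp sharpA_form_bounded BA_form_bounded. Qed.

Lemma modulus_scalable : scalable (Ssharp \o S).
Proof. by move=> a x; rewrite /= !linearZ. Qed.

End Sharp.

End PositiveOperator.

Theorem theorem3p11 (R : realType) (V : lmodType R[i]) (ip : V -> V -> R[i])
    (A B C : V -> V) :
  hilbert ip -> positive_op ip A -> BA ip A B -> BA ip A C ->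
  dwA0 ip A (opmx (@zero_op _ V) B C (@zero_op _ V)) ^+ 4 <=
    Num.max (omegaA ip A (sq_plus_4th (sharpA ip A C \o C)))
            (omegaA ip A (sq_plus_4th (sharpA ip A B \o B)))
  + 2 * omegaA0 ip A (opmx (@zero_op _ V) (sharpA ip A C \o C \o B)
                               (sharpA ip A B \o B \o C) (@zero_op _ V)) ^+ 2.
Proof.
move=> ipH Apos BBA CBA; rewrite dwA0_dwrad !omegaA_numrad omegaA0_numrad.
have ipAS := ipA_semi_inner ipH Apos.
have [QB QC] := (modulus_form_bounded ipH Apos BBA, modulus_form_bounded ipH Apos CBA).
have [sQB sQC] := (modulus_scalable ipH Apos BBA, modulus_scalable ipH Apos CBA).
set X := opmx _ B C _; set Y := opmx _ (_ \o B) (_ \o C) _.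
pose Q z := ((sharpA ip A C \o C) z.1, (sharpA ip A B \o B) z.2).
apply: (dwrad_le (semi_inner_pair ipAS) (Q := Q)) => [|x y|z z1].
- apply: addr_ge0; last by rewrite mulr_ge0 ?sqr_ge0.
  by rewrite le_max numrad_ge0.
- by rewrite /Q /pair_form /opmx /zero_op /= !add0r !addr0 !ipA_modulus // addrC.
apply: lerD.
  have -> : Q (Q z) + Q (Q (Q (Q z))) = (sq_plus_4th (sharpA ip A C \o C) z.1,
                                           sq_plus_4th (sharpA ip A B \o B) z.2) by [].
  exact: (Re_pair_diag_le_max ipAS (scalable_sq_plus_4th sQC) (scalable_sq_plus_4th sQB)
           (form_bounded_sq_plus_4th ipAS QC) (form_bounded_sq_plus_4th ipAS QB) z1).
have -> : Q (X z) = Y z by rewrite /Q /X /Y /opmx /zero_op /= !add0r !addr0.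
rewrite ler_pM2l // -cabs_sqr ler_sqr ?nnegrE ?cabs_ge0 ?numrad_ge0 //.
apply: (cabs_le_numrad (semi_inner_pair ipAS)) z1.
have [bB bC] := (BA_form_bounded ipH Apos BBA, BA_form_bounded ipH Apos CBA).
exact (form_bounded_antidiag ipAS (form_bounded_comp QC bB) (form_bounded_comp QB bC)).
Qed.
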